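(* Let $B$ be a Poisson algebra over a field $k$ of characteristic zero, $\alpha$ a Poisson derivation of $B$, and $A=B[x^{\pm1};\alpha]_p$. Assume that $\alpha$ extends to a derivation $\hat\alpha$ of $A$ with $\hat\alpha(x)=sx$ for some nonzero $s\in k$. Then every $\hat\alpha$-stable Poisson prime ideal of $A$ is induced from a Poisson prime ideal of $B$, i.e. has the form $QA=Q[x^{\pm1}]$ for a Poisson prime ideal $Q$ of $B$.
   Context: A Poisson derivation of a Poisson algebra $B$ is a $k$-linear map that is a derivation for both the multiplication and the Poisson bracket. $B[x^{\pm1};\alpha]_p$ denotes the Laurent polynomial ring $B[x^{\pm1}]$ with the unique Poisson bracket extending that of $B$ and satisfying $\{x,b\}=\alpha(b)x$ for $b\in B$. A Poisson prime ideal is a prime ideal $P$ with $\{A,P\}\subseteq P$. *)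

From HB Require Import structures.
From mathcomp Require Import all_boot all_order all_algebra ring_quotient.
Set Implicit Arguments. Unset Strict Implicit. Unset Printing Implicit Defensive.
Import GRing.Theory.
Local Open Scope ring_scope.

Definition poisson_bracket (k : fieldType) (R : comAlgType k)
    (br : R -> R -> R) : Prop :=
  [/\ (forall (c : k) (a b d : R), br (c *: a + b) d = c *: br a d + br b d),
      (forall (c : k) (a b d : R), br d (c *: a + b) = c *: br d a + br d b),
      (forall a b : R, br a b = - br b a),
      (forall a b c : R, br a (br b c) + br b (br c a) + br c (br a b) = 0) &
      (forall a b c : R, br a (b * c) = br a b * c + b * br a c)].

Definition derivation (k : fieldType) (R : comAlgType k) (d : R -> R) : Prop :=
  (forall (c : k) (a b : R), d (c *: a + b) = c *: d a + d b) /\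
  (forall a b : R, d (a * b) = d a * b + a * d b).

Definition poisson_derivation (k : fieldType) (R : comAlgType k)
    (br : R -> R -> R) (d : R -> R) : Prop :=
  derivation d /\ (forall a b : R, d (br a b) = br (d a) b + br a (d b)).

Definition prime_ideal (R : comNzRingType) (P : {pred R}) : Prop :=
  idealr_closed P /\ prime_idealr_closed P.

Definition poisson_prime (k : fieldType) (R : comAlgType k)
    (br : R -> R -> R) (P : {pred R}) : Prop :=
  prime_ideal P /\ (forall a u : R, u \in P -> br a u \in P).

(* (A, iota, x) is a Laurent polynomial ring B[x^{+-1}] over B:
   iota : B -> A is an injective k-algebra morphism, x is a unit of A,
   every element of A is x^-n * p(x) for some n and some p in B[X],
   and x is algebraically independent over iota(B). *)
Definition laurent_extension (k : fieldType) (B A : comAlgType k)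
    (iota : {lrmorphism B -> A}) (x : A) : Prop :=
  [/\ injective iota,
      (exists y : A, x * y = 1),
      (forall a : A, exists (n : nat) (p : {poly B}),
          a * x ^+ n = (map_poly iota p).[x]) &
      (forall p : {poly B}, (map_poly iota p).[x] = 0 -> p = 0)].

(* The Poisson bracket brA on A = B[x^{+-1}] is the one of B[x^{+-1};alpha]_p:
   it is a Poisson bracket, extends brB, and {x, b} = alpha(b) x. *)
Definition poisson_laurent (k : fieldType) (B A : comAlgType k)
    (brB : B -> B -> B) (alpha : B -> B)
    (iota : {lrmorphism B -> A}) (x : A) (brA : A -> A -> A) : Prop :=
  [/\ laurent_extension iota x,
      poisson_bracket brA,
      (forall b c : B, brA (iota b) (iota c) = iota (brB b c)) &
      (forall b : B, brA x (iota b) = iota (alpha b) * x)].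

(* The subset P of A equals the ideal Q[x^{+-1}] = QA induced from Q:
   P consists exactly of the Laurent polynomials x^-n p(x) with all
   coefficients of p in Q. *)
Definition induced_from (k : fieldType) (B A : comAlgType k)
    (iota : {lrmorphism B -> A}) (x : A) (P : {pred A}) (Q : {pred B}) : Prop :=
  forall a : A, a \in P <->
    exists (n : nat) (p : {poly B}),
      (forall i, p`_i \in Q) /\ a * x ^+ n = (map_poly iota p).[x].

From HB Require Import structures.
From mathcomp Require Import all_boot all_order all_algebra ring_quotient.
Set Implicit Arguments. Unset Strict Implicit. Unset Printing Implicit Defensive.
Import GRing.Theory.
Local Open Scope ring_scope.

(* The operator [alpha_hat - x^-1 {x, -}] on [A = B[x^{+-1}]] vanishes on [B]
   and sends [x] to [s x], so it acts on [b x^i] by the scalar [i s]; in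
   characteristic zero these eigenvalues are pairwise distinct.  A Poisson
   ideal [P] stable under [alpha_hat] is stable under this operator, hence
   contains every homogeneous component [b x^i] of its elements, hence [b].
   So [P] is induced from the Poisson prime [Q = iota^-1(P)] of [B]. *)

Section EigenComponents.
Variables (k : fieldType) (V : lmodType k) (P : {pred V}) (D : V -> V).
Hypothesis P_submod : submod_closed P.
Hypothesis D_linear : forall (c : k) (u v : V), D (c *: u + v) = c *: D u + D v.
Hypothesis P_stable : forall u, u \in P -> D u \in P.

HB.instance Definition _ := GRing.isSubmodClosed.Build k V P P_submod.
HB.instance Definition _ := GRing.isLinear.Build k V V *:%R D D_linear.

Lemma eigen_components_mem (lam : nat -> k) (v : nat -> V) (m : nat) :
  injective lam -> (forall i, D (v i) = lam i *: v i) ->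
  \sum_(i < m) v i \in P -> forall i, (i < m)%N -> v i \in P.
Proof.
(* [lam m - D] kills the top component and rescales the others by nonzero
   factors, so induction on [m] applies. *)
move=> lam_inj; elim: m v => [|m IHm] v Dv // Psum.
pose w j := (lam m - lam j) *: v j.
have Dw j : D (w j) = lam j *: w j by rewrite linearZ /= Dv !scalerA mulrC.
have Pw : \sum_(j < m) w j \in P.
  have -> : \sum_(j < m) w j =
      lam m *: \sum_(j < m.+1) v j - D (\sum_(j < m.+1) v j).
    rewrite scaler_sumr linear_sum -sumrB big_ord_recr /= Dv subrr addr0.
    by apply: eq_bigr => j _; rewrite Dv /w scalerBl.
  by rewrite rpredB ?rpredZ ?P_stable.
have Pv j : (j < m)%N -> v j \in P.
  move=> jm; have lam_neq : lam m - lam j != 0.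
    by rewrite subr_eq0; apply/eqP => /lam_inj jE; rewrite jE ltnn in jm.
  by rewrite -[v j](scalerK lam_neq) rpredZ // (IHm w).
move=> i; rewrite ltnS leq_eqVlt => /predU1P [->|]; last exact: Pv.
have -> : v m = \sum_(j < m.+1) v j - \sum_(j < m) v j.
  by rewrite big_ord_recr addrC addKr.
by rewrite rpredB // rpred_sum // => j _; apply: Pv.
Qed.

End EigenComponents.

Lemma natr_inj_pchar0 (F : idomainType) :
  [pchar F] =i pred0 -> injective (fun n : nat => n%:R : F).
Proof.
move=> /pcharf0P F0.
suff le_nat m n : m%:R = n%:R :> F -> (m <= n)%N.
  by move=> m n mn; apply/eqP; rewrite eqn_leq !le_nat.
move=> mn; rewrite -subn_eq0 -F0; case: (leqP n m) => [nm|/ltnW].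
  by rewrite natrB // mn subrr.
by rewrite -subn_eq0 => /eqP ->; rewrite mulr0n.
Qed.

Lemma idealr_submod_closed (k : fieldType) (A : algType k) (P : {pred A}) :
  idealr_closed P -> submod_closed P.
Proof. by case=> P0 _ PM; split=> // c u v Pu Pv; rewrite -mulr_algl PM. Qed.

Lemma prime_ideal_preim (R S : comNzRingType) (f : {rmorphism R -> S})
    (P : {pred S}) :
  prime_ideal P -> prime_ideal [pred a | f a \in P].
Proof.
case=> [[P0 P1 PM] Pprime]; split; first split.
- by rewrite inE rmorph0.
- by rewrite inE rmorph1.
- by move=> a u v; rewrite !inE rmorphD rmorphM; apply: PM.
- by move=> u v; rewrite !inE rmorphM; apply: Pprime.
Qed.

Lemma poisson_prime_preim (k : fieldType) (B A : comAlgType k)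
    (brB : B -> B -> B) (brA : A -> A -> A) (f : {lrmorphism B -> A})
    (P : {pred A}) :
  (forall b c, brA (f b) (f c) = f (brB b c)) ->
  poisson_prime brA P -> poisson_prime brB [pred b | f b \in P].
Proof.
move=> f_br [P_prime brP]; split; first exact: prime_ideal_preim.
by move=> a u; rewrite !inE -f_br; apply: brP.
Qed.

Section IdealMembership.
Variables (R : comNzRingType) (P : {pred R}).
Hypothesis P_ideal : idealr_closed P.

HB.instance Definition _ := isIdealr.Build R P P_ideal.

Lemma idealr_mulr_invertibleE (u v w : R) :
  v * w = 1 -> (u * v \in P) = (u \in P).
Proof.
move=> vw; apply/idP/idP => [Puv|Pu]; last by rewrite mulrC idealMr.
by rewrite -[u]mulr1 -vw mulrA mulrC idealMr.
Qed.

Lemma horner_map_mem (S : nzRingType) (f : S -> R) (p : {poly S}) (z : R) :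
  (forall i, f p`_i \in P) -> (map_poly f p).[z] \in P.
Proof.
move=> Pcoef; rewrite (horner_coef_wide _ (size_poly _ _)).
apply: rpred_sum => i _; rewrite coef_poly mulrC.
by case: ifP => _; [apply: idealMr | rewrite mulr0 rpred0].
Qed.

End IdealMembership.

Section Derivations.
Variables (k : fieldType) (R : comAlgType k).

Lemma derivation1 (d : R -> R) : derivation d -> d 1 = 0.
Proof.
case=> _ dM; have := dM 1 1; rewrite !mulr1 mul1r => d1.
by apply: (addrI (d 1)); rewrite addr0 -d1.
Qed.

Lemma derivationX_eigen (d : R -> R) (x : R) (c : k) (i : nat) :
  derivation d -> d x = c *: x -> d (x ^+ i) = (i%:R * c) *: x ^+ i.
Proof.
move=> d_der dx; elim: i => [|i IHi].
  by rewrite expr0 derivation1 // mul0r scale0r.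
rewrite exprS d_der.2 IHi dx -scalerAl -scalerAr -scalerDl.
by rewrite mulrSr mulrDl mul1r addrC.
Qed.

Lemma poisson_bracket_self (br : R -> R -> R) (a : R) :
  poisson_bracket br -> 2%:R != 0 :> k -> br a a = 0.
Proof.
case=> _ _ br_anti _ _ two_neq0.
have : (2%:R : k) *: br a a == 0 by rewrite scaler_nat mulr2n {1}br_anti addNr.
by rewrite scaler_eq0 (negbTE two_neq0) => /eqP.
Qed.

Lemma poisson_bracketX_eq0 (br : R -> R -> R) (a b : R) (i : nat) :
  poisson_bracket br -> br a b = 0 -> br a (b ^+ i) = 0.
Proof.
case=> _ _ _ _ brM ab0; elim: i => [|i IHi]; last first.
  by rewrite exprS brM ab0 IHi mul0r mulr0 addr0.
have := brM a 1 1; rewrite !mulr1 mul1r expr0 => br1.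
by apply: (addrI (br a 1)); rewrite addr0 -br1.
Qed.

End Derivations.

Section EulerOperator.
Variables (k : fieldType) (B A : comAlgType k) (alpha : B -> B).
Variables (iota : {lrmorphism B -> A}) (x y : A) (brA : A -> A -> A).
Variables (alpha_hat : A -> A) (s : k).
Hypothesis xy : x * y = 1.
Hypothesis brA_bracket : poisson_bracket brA.
Hypothesis brA_x_iota : forall b, brA x (iota b) = iota (alpha b) * x.
Hypothesis brA_xx : brA x x = 0.
Hypothesis ah_der : derivation alpha_hat.
Hypothesis ah_iota : forall b, alpha_hat (iota b) = iota (alpha b).
Hypothesis ah_x : alpha_hat x = s *: x.

(* [alpha_hat] and [y {x, -}] agree on [B]; their difference is the Euler
   derivation [s x d/dx], whose eigenvalue on [b x^i] is [i s]. *)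
Definition euler_op (a : A) : A := alpha_hat a - y * brA x a.

Lemma euler_op_linear (c : k) (u v : A) :
  euler_op (c *: u + v) = c *: euler_op u + euler_op v.
Proof.
case: brA_bracket => _ brl _ _ _.
rewrite /euler_op ah_der.1 brl mulrDr -scalerAr scalerBr.
by rewrite opprD addrACA.
Qed.

Lemma euler_op_monomial (b : B) (i : nat) :
  euler_op (iota b * x ^+ i) = (i%:R * s) *: (iota b * x ^+ i).
Proof.
case: brA_bracket => _ _ _ _ brM.
rewrite /euler_op ah_der.2 ah_iota (derivationX_eigen i ah_der ah_x).
rewrite brM brA_x_iota (poisson_bracketX_eq0 i brA_bracket brA_xx) mulr0 addr0.
rewrite -[_ * x * _]mulrA mulrCA [y * (x * _)]mulrA [y * x]mulrC xy mul1r.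
by rewrite -scalerAr addrAC subrr add0r.
Qed.

Variable P : {pred A}.
Hypothesis P_ideal : idealr_closed P.
Hypothesis P_ah : forall a, a \in P -> alpha_hat a \in P.
Hypothesis P_brA : forall a u, u \in P -> brA a u \in P.

HB.instance Definition _ := isIdealr.Build A P P_ideal.

Lemma horner_map_memP (p : {poly B}) :
  [pchar k] =i pred0 -> s != 0 ->
  (map_poly iota p).[x] \in P <-> forall i, iota p`_i \in P.
Proof.
move=> char0 s_neq0; split=> [Pp i|]; last exact: horner_map_mem.
have xyi : x ^+ i * y ^+ i = 1 by rewrite -exprMn xy expr1n.
rewrite -(idealr_mulr_invertibleE P_ideal _ xyi).
have [lt_ip|le_pi] := ltnP i (size p); last first.
  by rewrite nth_default // rmorph0 mul0r rpred0.
have P_euler u : u \in P -> euler_op u \in P.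
  by move=> Pu; rewrite rpredB ?idealMr ?P_ah ?P_brA.
have lam_inj : injective (fun j : nat => j%:R * s).
  by move=> m n /(mulIf s_neq0)/(natr_inj_pchar0 char0).
apply: (eigen_components_mem (idealr_submod_closed P_ideal) euler_op_linear
  P_euler lam_inj (fun j => euler_op_monomial p`_j j) _ lt_ip).
move: Pp; rewrite (horner_coef_wide _ (size_poly _ _)).
by under eq_bigr do rewrite coef_poly ltn_ord.
Qed.

End EulerOperator.

Theorem lemma1p2 (k : fieldType) (B A : comAlgType k)
    (brB : B -> B -> B) (alpha : B -> B)
    (iota : {lrmorphism B -> A}) (x : A) (brA : A -> A -> A)
    (alpha_hat : A -> A) (s : k) :
  [pchar k] =i pred0 ->
  poisson_bracket brB ->
  poisson_derivation brB alpha ->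
  poisson_laurent brB alpha iota x brA ->
  derivation alpha_hat ->
  (forall b : B, alpha_hat (iota b) = iota (alpha b)) ->
  s != 0 ->
  alpha_hat x = s *: x ->
  forall P : {pred A},
    poisson_prime brA P ->
    (forall a : A, a \in P -> alpha_hat a \in P) ->
    exists Q : {pred B}, poisson_prime brB Q /\ induced_from iota x P Q.
Proof.
move=> char0 _ _ [[_ [y xy] laurent_surj _] brA_bracket brA_iota brA_x]
  ah_der ah_iota s_neq0 ah_x P P_poisson P_ah.
have [[P_ideal _] P_brA] := P_poisson.
have two_neq0 : 2%:R != 0 :> k by move/pcharf0P: char0 => ->.
have brA_xx := poisson_bracket_self x brA_bracket two_neq0.
have PcoefP p := horner_map_memP xy brA_bracket brA_x brA_xx ah_der ah_iota
  ah_x P_ideal P_ah P_brA p char0 s_neq0.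
have xyn n : x ^+ n * y ^+ n = 1 by rewrite -exprMn xy expr1n.
exists ([pred b | iota b \in P] : {pred B}).
split; first exact: poisson_prime_preim.
move=> a; split=> [Pa|[n [p [Qp a_xn]]]].
  have [n [p a_xn]] := laurent_surj a; exists n, p; split=> //.
  by apply/PcoefP; rewrite -a_xn (idealr_mulr_invertibleE P_ideal _ (xyn n)).
by rewrite -(idealr_mulr_invertibleE P_ideal _ (xyn n)) a_xn; apply/PcoefP.
Qed.
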